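(* Fix integers $k\ge 3$ and $r\ge 1$. For integers $a\ge 0$, $0\le b\le r$ and a finite list $L=[l_1,\dots,l_t]$ ($t\ge 0$) of positive integers, let $A(r,a,b,L)$ be the number of words $w$ over the positive integers that contain exactly $r$ copies of each of the letters $1,\dots,a$, exactly $b$ copies of the letter $a+1$, exactly $l_j$ copies of the letter $a+1+j$ for $1\le j\le t$, and no other letters, such that both $w$ and the word $(a+1)w$ (obtained by prepending the letter $a+1$) avoid both patterns $123$ and $1k(k-1)\cdots 2$. (The empty word is counted.) For a list $L$, let $R(L)$ be the list obtained by deleting all entries equal to $0$. Suppose $b\ge 1$ and $t\le k-2$. Then $$A(r,a,b,L)=\sum_{i=\max(1,\ a-(k-2)+t+1)}^{a} A\big(r,\ i-1,\ r-1,\ [\underbrace{r,\dots,r}_{a-i\text{ copies}},\ b,\ l_1,\dots,l_t]\big)\ +\ A(r,a,b-1,L)\ +\ \delta_{t\ge 1}\,A\big(r,a,b,R([l_1,\dots,l_{t-1},l_t-1])\big),$$ where the sum is empty if its lower limit exceeds $a$, and $\delta_{t\ge1}$ equals $1$ if $t\ge 1$ and $0$ if $t=0$.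
   Context: A word $w_1\cdots w_m$ over the positive integers contains a pattern $p_1\cdots p_k$ if there are indices $i_1<\dots<i_k$ such that for all $r,s$: $w_{i_r}<w_{i_s}\iff p_r<p_s$ and $w_{i_r}>w_{i_s}\iff p_r>p_s$; otherwise it avoids it. The pattern $1k(k-1)\cdots 2$ is the permutation of length $k$ whose first entry is $1$ followed by $k,k-1,\dots,2$ in decreasing order (for $k=3$ it is $132$). *)

From mathcomp Require Import all_boot.
Set Implicit Arguments. Unset Strict Implicit. Unset Printing Implicit Defensive.

Fixpoint subseqs (w : seq nat) : seq (seq nat) :=
  if w is x :: w' then [seq x :: s | s <- subseqs w'] ++ subseqs w' else [:: [::]].

Definition order_iso (s p : seq nat) : bool :=
  all (fun i => all (fun j =>
        ((nth 0 s i < nth 0 s j) == (nth 0 p i < nth 0 p j)) &&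
        ((nth 0 s i > nth 0 s j) == (nth 0 p i > nth 0 p j)))
      (iota 0 (size p))) (iota 0 (size p)).

Definition contains (w p : seq nat) : bool :=
  has (fun s => (size s == size p) && order_iso s p) (subseqs w).

Definition avoids (w p : seq nat) : bool := ~~ contains w p.

Definition pat1k (k : nat) : seq nat := 1 :: rev (iota 2 k.-1).

Definition pat123 : seq nat := [:: 1; 2; 3].

Definition base_word (r a b : nat) (L : seq nat) : seq nat :=
  flatten [seq nseq r i | i <- iota 1 a] ++ nseq b a.+1 ++
  flatten [seq nseq (nth 0 L j) (a + 2 + j) | j <- iota 0 (size L)].

Definition good (k a : nat) (w : seq nat) : bool :=
  [&& avoids w pat123, avoids w (pat1k k),
      avoids (a.+1 :: w) pat123 & avoids (a.+1 :: w) (pat1k k)].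

(* A(r,a,b,L): number of words with exactly these letter multiplicities
   (= distinct rearrangements of base_word, `permutations` is duplicate-free)
   that are good. *)
Definition A (k r a b : nat) (L : seq nat) : nat :=
  count (good k a) (permutations (base_word r a b L)).

Definition Rz (L : seq nat) : seq nat := [seq x <- L | x != 0].

From mathcomp Require Import all_boot zify.
Set Implicit Arguments. Unset Strict Implicit. Unset Printing Implicit Defensive.

(* Classify the words counted by A(r,a,b,L) by their first letter x.  The
   letters of the multiset are 1, ..., a+1+t (t = size L), and:
   - if x + k <= a + t + 2, all of x+1, ..., x+k-1 follow x, so x starts an
     occurrence of 123 or of 1k(k-1)...2: no good word starts with x;
   - if 1 <= x <= a+1, the prefix letter a+1 of (a+1)w is redundant, and the
     rest of the word is a good word for the parameter x-1 whose multiset is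
     that of A(r, x-1, r-1, [r,...,r,b,L]) (x <= a) or A(r,a,b-1,L) (x = a+1);
   - if a+1 < x < a+1+t, the letters a+1, x, a+1+t form a 123;
   - if x = a+1+t is the largest letter, x can be deleted without creating or
     destroying occurrences, since an occurrence of 1k(k-1)...2 starting with
     a+1 and continuing with x would need x >= a+1+(k-1). *)

Lemma mem_subseqs s w : (s \in subseqs w) = subseq s w.
Proof.
elim: w s => [|x w IH] s /=; first by rewrite inE; case: s.
rewrite mem_cat IH; case: s => [|y s] /=; first by rewrite sub0seq orbT.
apply/orP/idP.
- case=> [/mapP [s' s'_sub [-> ->]]|sub_yw]; first by rewrite eqxx -IH.
  case: eqP => // y_x; rewrite y_x in sub_yw.
  exact: subseq_trans (subseq_cons s x) sub_yw.
- case: eqP => [->|_] sub_s; last by right.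
  by left; apply/mapP; exists s; rewrite ?IH.
Qed.

Lemma subseq_consP (T : eqType) (y : T) s w : subseq s (y :: w) ->
  subseq s w \/ exists s', s = y :: s' /\ subseq s' w.
Proof.
case: s => [|x s] /=; first by left; exact: sub0seq.
by case: eqP => [->|_] sub_s; [right; exists s | left].
Qed.

Lemma containsP w p :
  reflect (exists2 s, subseq s w & (size s == size p) && order_iso s p)
          (contains w p).
Proof.
apply: (iffP hasP) => [[s]|[s]]; first by rewrite mem_subseqs => ? ?; exists s.
by move=> ? ?; exists s; rewrite ?mem_subseqs.
Qed.

Lemma contains_sub u v p : subseq u v -> contains u p -> contains v p.
Proof.
move=> sub_uv /containsP [s sub_su iso_s]; apply/containsP.
by exists s => //; exact: subseq_trans sub_uv.
Qed.

Lemma contains_cons x w p : contains w p -> contains (x :: w) p.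
Proof. exact/contains_sub/subseq_cons. Qed.

Lemma contains_consP x w p : contains (x :: w) p ->
  contains w p \/
  exists2 s, subseq s w & (size (x :: s) == size p) && order_iso (x :: s) p.
Proof.
move=> /containsP [s sub_s iso_s].
case: (subseq_consP sub_s) => [sub_w|[s' [def_s sub_w]]].
  by left; apply/containsP; exists s.
by right; exists s'; rewrite -?def_s.
Qed.

Lemma contains_head x s w p : subseq s w -> size (x :: s) = size p ->
  order_iso (x :: s) p -> contains (x :: w) p.
Proof.
move=> sub_s size_s iso_s; apply/containsP; exists (x :: s).
  by rewrite /= eqxx.
by rewrite size_s eqxx.
Qed.

Lemma avoids_cons x w p : avoids (x :: w) p -> avoids w p.
Proof. by apply/contra; exact: contains_cons. Qed.

Lemma isoP s p : size s = size p ->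
  reflect (forall i j, i < size p -> j < size p ->
            (nth 0 s i < nth 0 s j) = (nth 0 p i < nth 0 p j))
          (order_iso s p).
Proof.
move=> size_s; apply: (iffP idP).
- move=> /allP iso_s i j lt_i lt_j.
  have /iso_s /allP /(_ j) : i \in iota 0 (size p) by rewrite mem_iota.
  by rewrite mem_iota => /(_ lt_j) /andP [/eqP].
- move=> lt_iso; apply/allP => i; rewrite mem_iota => lt_i.
  apply/allP => j; rewrite mem_iota => lt_j.
  by rewrite (lt_iso i j lt_i lt_j) (lt_iso j i lt_j lt_i) !eqxx.
Qed.

Lemma iso_lt s p i j : size s = size p -> order_iso s p ->
  i < size p -> j < size p ->
  (nth 0 s i < nth 0 s j) = (nth 0 p i < nth 0 p j).
Proof. by move=> size_s /(isoP size_s); apply. Qed.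

Lemma iso_shift d p : order_iso (map (addn d) p) p.
Proof.
apply/isoP; first by rewrite size_map.
by move=> i j lt_i lt_j; rewrite !(nth_map 0) // ltn_add2l.
Qed.

Definition first_min (p : seq nat) :=
  forall j, 0 < j < size p -> nth 0 p 0 < nth 0 p j.

Lemma head_replace x y s p : size (x :: s) = size p -> order_iso (x :: s) p ->
  y <= x -> first_min p -> order_iso (y :: s) p.
Proof.
move=> size_s iso_s le_yx min_p.
apply/isoP => // -[|i] [|j] lt_i lt_j /=; first by rewrite !ltnn.
- have := iso_lt size_s iso_s lt_i lt_j.
  rewrite /= min_p ?lt_j // => lt_xs.
  exact: leq_ltn_trans le_yx lt_xs.
- have := iso_lt size_s iso_s lt_i lt_j.
  have /ltnW/leq_gtF-> : nth 0 p 0 < nth 0 p i.+1 by rewrite min_p ?lt_i.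
  by rewrite /= => /negbT; rewrite -!leqNgt => /(leq_trans le_yx)/leq_gtF.
- exact: (iso_lt size_s iso_s lt_i lt_j).
Qed.

Lemma contains_lower_head c y w p : y <= c -> first_min p -> 2 <= size p ->
  contains (c :: y :: w) p = contains (y :: w) p.
Proof.
move=> le_yc min_p size_p; apply/idP/idP; last exact: contains_cons.
case/contains_consP => // -[s sub_s /andP [/eqP size_s iso_s]].
case: (subseq_consP sub_s) => [sub_w|[s' [def_s _]]].
  by apply: (contains_head sub_w) => //; exact: head_replace iso_s le_yc min_p.
have := iso_lt size_s iso_s (ltnW size_p) size_p.
by rewrite def_s /= min_p ?size_p // ltnNge le_yc.
Qed.

Lemma contains_max m w p : (forall z, z \in w -> z <= m) ->
  first_min p -> 2 <= size p -> contains (m :: w) p = contains w p.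
Proof.
move=> le_wm min_p size_p; apply/idP/idP; last exact: contains_cons.
case/contains_consP => // -[[|z s] sub_s /andP [/eqP size_s iso_s]].
  by rewrite -size_s in size_p.
have z_w : z \in w by apply: (mem_subseq sub_s); rewrite inE eqxx.
have := iso_lt size_s iso_s (ltnW size_p) size_p.
by rewrite /= min_p ?size_p // ltnNge => /negP[]; exact: le_wm.
Qed.

Lemma contains_drop_second c m w p : (forall z, z \in w -> z <= m) ->
  first_min p -> 2 <= size p ->
  (forall s, size (c :: m :: s) = size p -> order_iso (c :: m :: s) p ->
     subseq s w -> False) ->
  contains (c :: m :: w) p = contains (c :: w) p.
Proof.
move=> le_wm min_p size_p no_cm; apply/idP/idP; last first.
  by apply: contains_sub; rewrite /= eqxx; exact: subseq_cons.
case/contains_consP => [|[s sub_s /andP [/eqP size_s iso_s]]].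
  by rewrite contains_max // => /(contains_cons c).
case: (subseq_consP sub_s) => [sub_w|[s' [def_s sub_w]]].
  exact: contains_head sub_w size_s iso_s.
by case: (no_cm s'); rewrite -?def_s.
Qed.

Lemma first_min123 : first_min pat123.
Proof. by case=> [|[|[|j]]]. Qed.

Lemma size_pat1k k : 0 < k -> size (pat1k k) = k.
Proof. by case: k => // k _; rewrite /pat1k /= size_rev size_iota. Qed.

Lemma nth_pat1k k j : 0 < j < k -> nth 0 (pat1k k) j = k.+1 - j.
Proof.
case: j => [|j] //= lt_j.
rewrite nth_rev size_iota; last lia.
rewrite nth_iota; lia.
Qed.

Lemma nth0_pat1k k : nth 0 (pat1k k) 0 = 1.
Proof. by []. Qed.

Lemma first_min_pat1k k : 2 <= k -> first_min (pat1k k).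
Proof.
move=> k_ge2 j; rewrite size_pat1k; last lia.
by move=> lt_j; rewrite nth0_pat1k nth_pat1k //; lia.
Qed.

Lemma contains123_head c x z w : c < x -> x < z -> z \in w ->
  contains (c :: x :: w) pat123.
Proof.
move=> lt_cx lt_xz z_w; apply: (@contains_head c [:: x; z]) => //.
  by rewrite /= eqxx sub1seq.
by apply/isoP => // -[|[|[|i]]] [|[|[|j]]] //= _ _; lia.
Qed.

(* An occurrence s of 1k(k-1)...2 spreads over at least k-1 values between
   its first two letters: s_0 < s_(k-1) < ... < s_2 < s_1. *)
Lemma pat1k_gap k s : 3 <= k -> size s = k -> order_iso s (pat1k k) ->
  nth 0 s 0 + (k - 2) < nth 0 s 1.
Proof.
move=> k_ge3 size_s iso_s; set v := nth 0 s.
have size_p : size s = size (pat1k k) by rewrite size_pat1k //; lia.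
have lt_v i j : i < k -> j < k ->
    (v i < v j) = (nth 0 (pat1k k) i < nth 0 (pat1k k) j).
  by move=> lt_i lt_j; apply: iso_lt; rewrite // -size_p size_s.
have first_lt_last : v 0 < v k.-1 by rewrite lt_v ?nth0_pat1k ?nth_pat1k; lia.
have desc j : 0 < j -> j.+1 < k -> v j.+1 < v j.
  by move=> j_gt0 lt_j; rewrite lt_v ?nth_pat1k; lia.
have spread n : n.+1 < k -> v n.+1 + n <= v 1.
  elim: n => [|n IH] lt_n; first by rewrite addn0.
  by have := IH (ltnW lt_n); have := desc n.+1 isT lt_n; lia.
have := spread (k - 2) (ltac:(lia)).
have -> : (k - 2).+1 = k.-1 by lia.
lia.
Qed.

Lemma contains123_drop_max c m w : (forall z, z \in w -> z <= m) ->
  contains (c :: m :: w) pat123 = contains (c :: w) pat123.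
Proof.
move=> le_wm; apply: contains_drop_second first_min123 _ _ => //.
case=> [|z s] size_s iso_s sub_s //.
have z_w : z \in w by apply: (mem_subseq sub_s); rewrite inE eqxx.
have := iso_lt (i := 1) (j := 2) size_s iso_s isT isT.
by rewrite /= ltnNge => /negP[]; exact: le_wm.
Qed.

Lemma contains1k_drop_max c m w k : 3 <= k -> m <= c + (k - 2) ->
  (forall z, z \in w -> z <= m) ->
  contains (c :: m :: w) (pat1k k) = contains (c :: w) (pat1k k).
Proof.
move=> k_ge3 le_mc le_wm.
apply: contains_drop_second (first_min_pat1k _) _ _ => //; first lia.
  by rewrite size_pat1k; lia.
move=> s size_s iso_s _.
have := pat1k_gap k_ge3 _ iso_s; rewrite size_s size_pat1k /=; lia.
Qed.

Lemma desc_subseq i S w : sorted (fun x y => y < x) S -> {subset S <= w} ->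
  all (fun z => i < z) S ->
  (forall u v, subseq [:: u; v] w -> i < u -> u < v -> False) -> subseq S w.
Proof.
elim: w S => [|y w IH] [|s1 S] sorted_s1S sub_S gt_S no_inc //=.
  by have := sub_S s1; rewrite inE eqxx => /(_ isT).
have gt_trans : transitive (fun x y : nat => y < x).
  by move=> x1 x2 x3 lt21 lt32; exact: ltn_trans lt32 lt21.
move: (sorted_s1S); rewrite /= (path_sortedE gt_trans) => /andP [lt_S sorted_S].
move: gt_S => /= /andP [gt_s1 gt_S].
have no_inc_w u v : subseq [:: u; v] w -> i < u -> u < v -> False.
  by move=> sub_uv; apply: no_inc; exact: subseq_trans sub_uv (subseq_cons w y).
have in_w z : z \in s1 :: S -> z != y -> z \in w.
  by move=> z_S /negPf z_y; move: (sub_S z z_S); rewrite inE z_y.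
case: eqP => [def_y|/eqP ne_y].
  apply: IH => // z z_S; apply: in_w; first by rewrite inE z_S orbT.
  by rewrite -def_y; apply: contraTneq (allP lt_S z z_S) => ->; rewrite /= ltnn.
apply: (IH (s1 :: S)) => //=; rewrite ?gt_s1 //.
move=> z z_s1S; apply: (in_w) => //; apply/eqP => def_z.
move: z_s1S; rewrite inE => /orP [/eqP def_s1|z_S].
  by rewrite -def_s1 def_z eqxx in ne_y.
apply: (no_inc y s1).
- by rewrite /= eqxx sub1seq in_w ?inE ?eqxx.
- by rewrite -def_z (allP gt_S z z_S).
- by rewrite -def_z (allP lt_S z z_S).
Qed.

(* If all of i+1, ..., i+k-1 occur after i, then i starts an occurrence of
   123 (an increasing pair among them) or of 1k(k-1)...2 (otherwise they
   occur in decreasing order). *)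
Lemma contains_full_range i w k : 0 < i -> 3 <= k ->
  (forall z, i < z < i + k -> z \in w) ->
  contains (i :: w) pat123 || contains (i :: w) (pat1k k).
Proof.
move=> i_gt0 k_ge3 range_w; case no123: (contains (i :: w) pat123) => //=.
have no_inc u v : subseq [:: u; v] w -> i < u -> u < v -> False.
  move=> sub_uv lt_iu lt_uv; move: no123.
  rewrite (@contains_head i [:: u; v] w) //.
  by apply/isoP => // -[|[|[|x]]] [|[|[|y]]] //= _ _; lia.
set S := rev (iota i.+1 (k - 1)).
have sub_S : subseq S w.
  apply: (desc_subseq (i := i)) no_inc.
  - by rewrite /S rev_sorted; exact: iota_ltn_sorted.
  - by move=> z; rewrite /S mem_rev mem_iota => z_range; apply: range_w; lia.
  - by apply/allP => z; rewrite /S mem_rev mem_iota; lia.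
apply: (contains_head sub_S).
  by rewrite size_pat1k /= ?size_rev ?size_iota; lia.
have -> : i :: S = map (addn i.-1) (pat1k k).
  rewrite /pat1k /= map_rev -iotaDl /S; congr (_ :: rev (iota _ _)); lia.
exact: iso_shift.
Qed.

Lemma good_low_first k a x w : 3 <= k -> 0 < x <= a.+1 ->
  good k a (x :: w) = good k x.-1 w.
Proof.
move=> k_ge3 /andP [x_gt0 le_xa].
have size1k : 2 <= size (pat1k k) by rewrite size_pat1k; lia.
rewrite /good /avoids prednK // (contains_lower_head w le_xa first_min123) //.
rewrite (contains_lower_head w le_xa (first_min_pat1k _) size1k); last lia.
apply/and4P/and4P => [[av123 av1k _ _]|[_ _ av123 av1k]]; last by split.
by split=> //; [exact: avoids_cons av123 | exact: avoids_cons av1k].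
Qed.

Lemma good_drop_max k a m w : 3 <= k -> m <= a.+1 + (k - 2) ->
  (forall z, z \in w -> z <= m) -> good k a (m :: w) = good k a w.
Proof.
move=> k_ge3 le_m le_wm.
have size1k : 2 <= size (pat1k k) by rewrite size_pat1k; lia.
have min1k : first_min (pat1k k) by apply: first_min_pat1k; lia.
rewrite /good /avoids contains123_drop_max // contains1k_drop_max //.
by rewrite (contains_max le_wm first_min123) // (contains_max le_wm min1k).
Qed.

Lemma good_gap_first k a x m w : a.+1 < x < m -> m \in w ->
  good k a (x :: w) = false.
Proof.
move=> /andP [lt_ax lt_xm] m_w.
by rewrite /good /avoids (contains123_head lt_ax lt_xm m_w) /= !andbF.
Qed.

Lemma good_full_range_first k a i w : 0 < i -> 3 <= k ->
  (forall z, i < z < i + k -> z \in w) -> good k a (i :: w) = false.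
Proof.
move=> i_gt0 k_ge3 range_w; rewrite /good /avoids.
by case/orP: (contains_full_range i_gt0 k_ge3 range_w) => ->; rewrite ?andbF.
Qed.

Definition mult r a b (L : seq nat) y :=
  (0 < y <= a) * r + (a.+1 == y) * b + (a.+2 <= y) * nth 0 L (y - a.+2).

Lemma sumn_indicator m n g y :
  sumn [seq (j == y) * g j | j <- iota m n] = (m <= y < m + n) * g y.
Proof.
elim: n m => [|n IH] m /=; first by rewrite addn0 andbC ltnNge andNb.
rewrite IH; case: ltngtP => // [_|<-]; first by rewrite addSn addnS.
by rewrite addnS ltnS leq_addr mul1n addn0.
Qed.

Lemma count_base_word r a b L y :
  count_mem y (base_word r a b L) = mult r a b L y.
Proof.
rewrite /base_word !count_cat !count_flatten -!map_comp.
rewrite (@eq_map _ _ _ (fun j => (j == y) * r)); last first.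
  by move=> j /=; rewrite count_nseq mulnC.
rewrite sumn_indicator count_nseq add1n ltnS addnA.
rewrite (@eq_map _ _ _
  ((fun j => (j == y) * nth 0 L (j - a.+2)) \o addn a.+2)); last first.
  by move=> j /=; rewrite count_nseq addKn addn2.
rewrite map_comp -iotaDl addn0 sumn_indicator /mult; congr (_ + _).
case: (ltnP y (a.+2 + size L)) => [_|le_y]; first by rewrite andbT.
by rewrite andbF nth_default ?muln0 // leq_subRL // (leq_trans _ le_y) ?leq_addr.
Qed.

Lemma mult_pos r a b L z : 0 < r -> 0 < b -> all (fun l => 0 < l) L ->
  (0 < mult r a b L z) = (0 < z <= a + 1 + size L).
Proof.
move=> r_gt0 b_gt0 /all_nthP L_pos; rewrite /mult.
case: (leqP z a.+1) => le_za; first by case: (eqVneq a.+1 z); lia.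
rewrite (_ : (0 < z <= a) = false) 1?(_ : (a.+1 == z) = false) /=; try lia.
case: (ltnP (z - a.+2) (size L)) => lt_zL; first by have := L_pos 0 _ lt_zL; lia.
by rewrite nth_default //; lia.
Qed.

Lemma mult_remove_low r a b L x z : 0 < x <= a -> 0 < r ->
  mult r a b L z - (x == z) = mult r x.-1 r.-1 (nseq (a - x) r ++ b :: L) z.
Proof.
move=> /andP [x_gt0 le_xa] r_gt0.
rewrite /mult prednK // nth_cat size_nseq nth_nseq.
case: (leqP z a.+1) => le_za; last first.
  have -> : (z - x.+1 < a - x) = false by lia.
  have -> : z - x.+1 - (a - x) = (z - a.+2).+1 by lia.
  rewrite /=; lia.
case: (ltnP x z) => lt_xz; last by case: (eqVneq x z); lia.
have -> : (x == z) = false by lia.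
case: ifP => lt_z; first by rewrite lt_z /=; lia.
have -> : z - x.+1 - (a - x) = 0 by lia.
rewrite /=; lia.
Qed.



Lemma mult_remove_mid r a b L z : 0 < b ->
  mult r a b L z - (a.+1 == z) = mult r a b.-1 L z.
Proof. by move=> b_gt0; rewrite /mult; case: (eqVneq a.+1 z); lia. Qed.

Lemma mult_remove_top r a b L0 l z : 0 < l -> all (fun l => 0 < l) L0 ->
  mult r a b (rcons L0 l) z - (a.+2 + size L0 == z) =
  mult r a b (Rz (rcons L0 l.-1)) z.
Proof.
move=> l_gt0 L0_pos; rewrite /Rz filter_rcons.
rewrite (_ : [seq x <- L0 | x != 0] = L0); last first.
  by apply/all_filterP; apply: sub_all L0_pos => x; rewrite lt0n.
rewrite /mult; case: (leqP a.+2 z) => le_z; last first.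
  have -> : (a.+2 + size L0 == z) = false by lia.
  by rewrite /= !mul0n !addn0 subn0.
have [j ->] : exists j, z = a.+2 + j by exists (z - a.+2); rewrite subnKC.
have -> : (0 < a.+2 + j <= a) = false by lia.
have -> : (a.+1 == a.+2 + j) = false by lia.
rewrite eqn_add2l addKn /= !mul0n !add0n !mul1n nth_rcons.
case: (ltngtP j (size L0)) => [lt_j|gt_j|->] /=.
- by rewrite subn0; case: ifP; rewrite ?nth_rcons ?lt_j.
- by case: ifP; rewrite nth_default ?size_rcons // ltnW.
- case: ifP => [_|/negbFE/eqP l1]; last by rewrite nth_default //; lia.
  by rewrite nth_rcons ltnn eqxx; lia.
Qed.


Lemma count_permutations_first (T : eqType) (Q : pred (seq T)) s :
  0 < size s -> count Q (permutations s) =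
  \sum_(x <- undup s) count (fun w => Q (x :: w)) (permutations (rem x s)).
Proof.
move=> s_gt0; rewrite (permP (permutationsE s_gt0) Q) count_flatten sumnE.
by rewrite !big_map; apply: eq_bigr => x _; rewrite count_map.
Qed.

Lemma count_good_mult k r a b L s :
  (forall z, count_mem z s = mult r a b L z) ->
  count (good k a) (permutations s) = A k r a b L.
Proof.
move=> mult_s; apply/permP/perm_permutations/allP => z _.
by rewrite inE mult_s count_base_word.
Qed.

Section FirstLetter.

Variables (k r a b : nat) (L : seq nat).
Hypotheses (k_ge3 : 3 <= k) (r_gt0 : 0 < r) (b_gt0 : 0 < b)
  (L_pos : all (fun l => 0 < l) L).

Local Notation t := (size L).
Local Notation M := (base_word r a b L).

Definition first_count x :=
  count (fun w => good k a (x :: w)) (permutations (rem x M)).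

Lemma mem_base_word z : (z \in M) = (0 < z <= a + 1 + t).
Proof. by rewrite -has_pred1 has_count count_base_word mult_pos. Qed.

Lemma mem_rest x w z : w \in permutations (rem x M) ->
  (z \in w) = (0 < mult r a b L z - (x == z)).
Proof.
rewrite mem_permutations => /perm_mem ->.
by rewrite -has_pred1 has_count count_mem_rem count_base_word.
Qed.

Lemma A_first_letter : A k r a b L = \sum_(1 <= x < a.+2 + t) first_count x.
Proof.
have M_gt0 : 0 < size M.
  by case: M (mem_base_word a.+1) => //; rewrite in_nil; lia.
rewrite /A count_permutations_first //.
have perm_letters : perm_eq (undup M) (index_iota 1 (a.+2 + t)).
  apply: uniq_perm; rewrite ?undup_uniq ?iota_uniq // => z.
  by rewrite mem_undup mem_base_word mem_index_iota; lia.
by rewrite (perm_big _ perm_letters).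
Qed.

(* A first letter x with x + k <= a + t + 2 is followed by all of
   x+1, ..., x+k-1. *)
Lemma first_count_low_zero x : 0 < x -> x + k <= a + t + 2 ->
  first_count x = 0.
Proof.
move=> x_gt0 le_xk; apply/eqP; rewrite -leqn0 leqNgt -has_count.
apply/hasPn => w w_perm; rewrite good_full_range_first // => z range_z.
by rewrite (mem_rest _ w_perm) (_ : (x == z) = false) ?subn0 ?mult_pos; lia.
Qed.

Lemma first_count_low x : 0 < x <= a ->
  first_count x = A k r x.-1 r.-1 (nseq (a - x) r ++ b :: L).
Proof.
move=> x_range; rewrite /first_count (eq_count (a2 := good k x.-1)).
  apply: count_good_mult => z.
  by rewrite count_mem_rem count_base_word mult_remove_low.
by move=> w; rewrite good_low_first //; lia.
Qed.

(* First letter a+1: the prefix letter a+1 is simply repeated. *)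
Lemma first_count_mid : first_count a.+1 = A k r a b.-1 L.
Proof.
rewrite /first_count (eq_count (a2 := good k a)).
  apply: count_good_mult => z.
  by rewrite count_mem_rem count_base_word mult_remove_mid.
by move=> w; rewrite good_low_first //; lia.
Qed.

(* A first letter strictly between a+1 and the largest letter a+1+t forms a
   123 with the prefix a+1 and a later copy of a+1+t. *)
Lemma first_count_gap_zero x : a.+1 < x < a.+1 + t -> first_count x = 0.
Proof.
move=> x_range; apply/eqP; rewrite -leqn0 leqNgt -has_count.
apply/hasPn => w w_perm; rewrite (@good_gap_first _ _ _ (a.+1 + t)) //.
by rewrite (mem_rest _ w_perm) (_ : (x == _) = false) ?subn0 ?mult_pos; lia.
Qed.

Lemma first_count_top : 0 < t -> t <= k - 2 ->
  first_count (a.+1 + t) =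
  A k r a b (Rz (rcons (take t.-1 L) (last 0 L).-1)).
Proof.
move=> t_gt0 le_tk; rewrite /first_count (eq_in_count (a2 := good k a)).
  apply: count_good_mult => z; rewrite count_mem_rem count_base_word.
  case: (lastP L) t_gt0 L_pos => [|L0 l]; rewrite ?size_rcons // all_rcons.
  move=> _ /andP [l_gt0 L0_pos]; rewrite -cats1 take_size_cat // cats1.
  by rewrite last_rcons -addSnnS mult_remove_top.
move=> w w_perm; rewrite good_drop_max //; first lia.
move=> z; rewrite (mem_rest _ w_perm) => mult_z.
have : 0 < mult r a b L z by lia.
by rewrite mult_pos //; lia.
Qed.

Lemma sum_first_above : t <= k - 2 ->
  \sum_(a.+2 <= x < a.+2 + t) first_count x =
  if 1 <= t then A k r a b (Rz (rcons (take t.-1 L) (last 0 L).-1)) else 0.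
Proof.
move=> le_tk; case: (posnP t) => [->|t_gt0]; first by rewrite addn0 big_geq.
have gap : \sum_(a.+2 <= x < a.+1 + t) first_count x = 0.
  apply: big1_seq => x /andP [_]; rewrite mem_index_iota => x_range.
  by apply: first_count_gap_zero; lia.
by rewrite addSn big_nat_recr /= ?gap ?first_count_top //; lia.
Qed.

End FirstLetter.

(* Split the first letters into [1, lo), [lo, a+1), {a+1} and [a+2, a+2+t),
   where lo = max(1, a+t+3-k). *)
Theorem theorem2 (k r a b : nat) (L : seq nat) :
  3 <= k -> 1 <= r -> 1 <= b -> b <= r -> all (fun l => 0 < l) L ->
  size L <= k - 2 ->
  A k r a b L =
    \sum_(maxn 1 (a + size L + 3 - k) <= i < a.+1)
        A k r i.-1 r.-1 (nseq (a - i) r ++ b :: L)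
    + A k r a b.-1 L
    + (if 1 <= size L then
         A k r a b (Rz (rcons (take (size L).-1 L) (last 0 L).-1))
       else 0).
Proof.
move=> k_ge3 r_gt0 b_gt0 _ L_pos le_tk.
set lo := maxn 1 _; have lo_ge1 : 1 <= lo by exact: leq_maxl.
have low_zero : \sum_(1 <= x < lo) first_count k r a b L x = 0.
  apply: big1_seq => x /andP [_]; rewrite mem_index_iota => x_range.
  by apply: first_count_low_zero => //; lia.
have low_range : \sum_(lo <= x < a.+1) first_count k r a b L x =
           \sum_(lo <= x < a.+1) A k r x.-1 r.-1 (nseq (a - x) r ++ b :: L).
  by apply: eq_big_nat => x x_range; apply: first_count_low => //; lia.
rewrite A_first_letter // (big_cat_nat lo_ge1) /=; last lia.
rewrite (@big_cat_nat _ _ _ a.+1 lo) /=; [|lia|lia].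
rewrite (@big_cat_nat _ _ _ a.+2 a.+1) /=; [|lia|lia].
by rewrite low_zero low_range big_nat1 first_count_mid // sum_first_above // add0n addnA.
Qed.
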